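(* Let $\lambda$ be a composition of $n\ge2$. Then $d(U_\lambda,\tilde U_\lambda)\le\frac1n$, where $d$ is the metric of $\mathcal{U}^{(2)}$.
   Context: A composition $\lambda=(\lambda_1,\dots,\lambda_r)$ of $n$ has descent set $D_\lambda=\{\lambda_1,\lambda_1+\lambda_2,\dots,\lambda_1+\dots+\lambda_{r-1}\}$. $\mathcal{U}^{(2)}$ is the set of pairs $(U_\uparrow,U_\downarrow)$ of disjoint open subsets of $]0,1[$ with metric $d((U_\uparrow,U_\downarrow),(V_\uparrow,V_\downarrow))=\max(d_{Haus}(U_\uparrow^c,V_\uparrow^c),d_{Haus}(U_\downarrow^c,V_\downarrow^c))$, complements in $[0,1]$. With $I_s=[\frac{s-1}{n-1},\frac{s}{n-1}]$, $U_\lambda=(\mathrm{int}\bigcup_{s\notin D_\lambda}I_s,\ \mathrm{int}\bigcup_{s\in D_\lambda}I_s)$ ($1\le s\le n-1$). A cell $i\in[1,n]$ is a peak if $i\in D_\lambda\cup\{n\}$ and $i-1\notin D_\lambda$, and a valley if $i\notin D_\lambda$ and $i-1\in D_\lambda\cup\{0\}$; let $1=a_1<\dots<a_{t+1}=n$ be the peaks and valleys. The run paintbox is $\tilde U_\lambda=(\bigcup_{a_i\text{ valley}}]\frac{a_i-1}{n},\frac{a_{i+1}-1}{n}[,\ \bigcup_{a_i\text{ peak}}]\frac{a_i-1}{n},\frac{a_{i+1}-1}{n}[)$, with $a_{i+1}=n+1$ when $a_i=n$. *)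

From HB Require Import structures.
From mathcomp Require Import all_boot all_order all_algebra.
From mathcomp Require Import all_classical all_reals all_analysis.
Set Implicit Arguments. Unset Strict Implicit. Unset Printing Implicit Defensive.
Import Order.TTheory GRing.Theory Num.Theory.
Import numFieldNormedType.Exports.
Local Open Scope classical_set_scope.
Local Open Scope ring_scope.

Definition is_composition (n : nat) (lam : seq nat) : Prop :=
  all (fun x => (0 < x)%N) lam /\ sumn lam = n.

Definition descents (lam : seq nat) : seq nat :=
  [seq sumn (take k lam) | k <- iota 1 (size lam).-1].

Section Paintbox.
Variable R : realType.

Definition set_dist (x : R) (B : set R) : R := inf [set `|x - b| | b in B].
Definition hausdorff (A B : set R) : R :=
  Num.max (sup [set set_dist a B | a in A]) (sup [set set_dist b A | b in B]).

Definition compl01 (U : set R) : set R := [set x | 0 <= x <= 1] `\` U.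

Definition dU2 (U V : set R * set R) : R :=
  Num.max (hausdorff (compl01 U.1) (compl01 V.1))
          (hausdorff (compl01 U.2) (compl01 V.2)).

Definition Iseg (n s : nat) : set R :=
  [set x | (s.-1)%:R / (n.-1)%:R <= x <= s%:R / (n.-1)%:R].

Definition U_lam (n : nat) (lam : seq nat) : set R * set R :=
  (@interior R (\bigcup_(s in [set s : nat | (1 <= s <= n.-1)%N /\ s \notin descents lam])
              Iseg n s),
   @interior R (\bigcup_(s in [set s : nat | (1 <= s <= n.-1)%N /\ s \in descents lam])
              Iseg n s)).

Definition is_peak (n : nat) (lam : seq nat) (i : nat) : bool :=
  ((i \in descents lam) || (i == n)) && (i.-1 \notin descents lam).
Definition is_valley (n : nat) (lam : seq nat) (i : nat) : bool :=
  (i \notin descents lam) && ((i.-1 \in descents lam) || (i.-1 == 0%N)).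

Definition peaks_valleys (n : nat) (lam : seq nat) : seq nat :=
  [seq i <- iota 1 n | is_peak n lam i || is_valley n lam i].

(* a_{i+1} for a_i (with n+1 after the last one, a_{t+1} = n) *)
Definition next_pv (n : nat) (lam : seq nat) (a : nat) : nat :=
  nth n.+1 (peaks_valleys n lam) (index a (peaks_valleys n lam)).+1.

Definition run_interval (n : nat) (lam : seq nat) (a : nat) : set R :=
  [set x | (a.-1)%:R / n%:R < x < ((next_pv n lam a).-1)%:R / n%:R].

Definition run_paintbox (n : nat) (lam : seq nat) : set R * set R :=
  (\bigcup_(a in [set a | a \in peaks_valleys n lam /\ is_valley n lam a])
      run_interval n lam a,
   \bigcup_(a in [set a | a \in peaks_valleys n lam /\ is_peak n lam a])
      run_interval n lam a).

End Paintbox.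

(* Both pairs of sets are interiors of unions of closed grid cells of one colour.
   U_lam uses the n-1 cells I_s, of colour [s \in D_lam]; the run paintbox uses
   the n cells [(j-1)/n, j/n], coloured the same way for j < n, because its runs
   are exactly the maximal monochromatic blocks of cells. In [0,1] the complement
   of such an interior is {0, 1} together with the cells of the other colour, and
   the s-th cell of the (n-1)-grid lies within 1/n of the s-th cell of the n-grid
   (the extra n-th cell lies within 1/n of 1); this bounds both Hausdorff
   distances by 1/n. *)

From HB Require Import structures.
From mathcomp Require Import all_boot all_order all_algebra.
From mathcomp Require Import all_classical all_reals all_analysis.
From mathcomp Require Import lra zify.
Import Order.TTheory GRing.Theory Num.Theory.
Import numFieldNormedType.Exports.
Set Implicit Arguments. Unset Strict Implicit. Unset Printing Implicit Defensive.
Local Open Scope classical_set_scope.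
Local Open Scope ring_scope.

Section Distances.
Variable R : realType.

Lemma set_dist_le (a b d : R) (B : set R) : B b -> `|a - b| <= d -> set_dist a B <= d.
Proof.
move=> Bb; apply: le_trans; apply: ge_inf; last by exists b.
by exists 0 => _ [y _ <-].
Qed.

Lemma hausdorff_le (A B : set R) (d : R) : 0 <= d ->
  (forall a, A a -> exists2 b, B b & `|a - b| <= d) ->
  (forall b, B b -> exists2 a, A a & `|b - a| <= d) -> hausdorff A B <= d.
Proof.
have sup_le (X : set R) : (forall x, X x -> x <= d) -> 0 <= d -> sup X <= d.
  move=> Xd d0; have [->|/set0P X0] := eqVneq X set0; first by rewrite sup0.
  exact: ge_sup.
move=> d0 AB BA; rewrite /hausdorff ge_max; apply/andP; split;
  apply: sup_le => // _ [x Ax <-].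
  by have [b Bb] := AB x Ax; exact: set_dist_le.
by have [a Aa] := BA x Ax; exact: set_dist_le.
Qed.

Lemma not_interior_itv (A : set R) (a b x : R) : a < b -> a <= x <= b ->
  (forall z, a < z < b -> ~ A z) -> ~ A° x.
Proof.
move=> ab /andP[ax xb] Aab /nbhs_ballP[e /= e0 eA].
have [z /andP[az zb] xz] : exists2 z, a < z < b & `|x - z| < e.
  have [xb'|xb'] := ltP x b.
    exists (x + Num.min e (b - x) / 2).
      have : 0 < Num.min e (b - x) <= b - x by rewrite lt_min e0 subr_gt0 xb' ge_min lexx orbT.
      move=> ?; apply/andP; split; lra.
    have : 0 < Num.min e (b - x) <= e by rewrite lt_min e0 subr_gt0 xb' ge_min lexx.
    move=> ?; rewrite opprD addrA subrr sub0r normrN ger0_norm; lra.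
  have -> : x = b by apply/eqP; rewrite eq_le xb.
  exists (b - Num.min e (b - a) / 2).
    have : 0 < Num.min e (b - a) <= b - a by rewrite lt_min e0 subr_gt0 ab ge_min lexx orbT.
    move=> ?; apply/andP; split; lra.
  have : 0 < Num.min e (b - a) <= e by rewrite lt_min e0 subr_gt0 ab ge_min lexx.
  move=> ?; rewrite opprB addrC subrK ger0_norm; lra.
by apply: (Aab z); [rewrite az zb | apply: eA].
Qed.

Lemma dist_le_inv (N u v : R) : 0 < N -> `|u * N - v * N| <= 1 -> `|u - v| <= 1 / N.
Proof. by move=> N0; rewrite -mulrBl normrM (gtr0_norm N0) -ler_pdivlMr. Qed.

End Distances.

Section Cells.
Variables (R : realType) (m : nat).
Hypothesis m_gt0 : (0 < m)%N.

(* [Iseg n s] is [cell (n.-1) s], so the components of [U_lam] are interiors of [cells]. *)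
Definition cell (s : nat) : set R := [set x | (s.-1)%:R / m%:R <= x <= s%:R / m%:R].

Definition cells (P : pred nat) : set R :=
  \bigcup_(s in [set s | (1 <= s <= m)%N /\ P s]) cell s.

Let mR_gt0 : 0 < m%:R :> R. Proof. by rewrite ltr0n. Qed.

Lemma cellE s x : cell s x <-> (s.-1)%:R <= x * m%:R <= s%:R.
Proof. by rewrite /cell /= ler_pdivrMr ?ler_pdivlMr. Qed.

Lemma cell_sub01 s x : (s <= m)%N -> cell s x -> 0 <= x <= 1.
Proof.
move=> sm /cellE /andP[lo hi].
have : s%:R <= m%:R :> R by rewrite ler_nat.
have : 0 <= (s.-1)%:R :> R by [].
have := mR_gt0; move=> ? ? ?; apply/andP; split; nra.
Qed.

Lemma cells_sub01 P x : cells P x -> 0 <= x <= 1.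
Proof. by move=> [s [/andP[_ sm] _]]; exact: cell_sub01. Qed.

Lemma cells_cover x : 0 <= x <= 1 -> exists2 s, (1 <= s <= m)%N & cell s x.
Proof.
move=> /andP[x0 x1]; have [->|x_lt1] := eqVneq x 1.
  by exists m; [lia | rewrite cellE mul1r ler_nat leq_pred lexx].
have xm_ge0 : 0 <= x * m%:R by rewrite mulr_ge0.
have /andP[lo hi] := truncn_itv xm_ge0.
exists (Num.truncn (x * m%:R)).+1; last by rewrite cellE /= lo ltW.
rewrite ltnS truncn_lt_nat //= -[ltRHS]mul1r ltr_pM2r //.
by rewrite lt_neqAle x_lt1 x1.
Qed.

Lemma open_cell_notin_cells (P : pred nat) s x : (1 <= s)%N -> ~~ P s ->
  (s.-1)%:R < x * m%:R < s%:R -> ~ cells P x.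
Proof.
move=> s1 nPs /andP[lo hi] [s' [/andP[s'1 _] Ps'] /cellE /andP[lo' hi']].
have [ss'|s's|ess'] := ltngtP s s'; last by rewrite ess' Ps' in nPs.
- have : s%:R <= (s'.-1)%:R :> R by rewrite ler_nat; lia.
  lra.
- have : s'%:R <= (s.-1)%:R :> R by rewrite ler_nat; lia.
  lra.
Qed.

Lemma interior_cellsP P x :
  (cells P)° x <-> 0 < x < 1 /\ forall s, (1 <= s <= m)%N -> cell s x -> P s.
Proof.
split=> [intx|[/andP[x0 x1] Pcov]].
  have /cells_sub01 /andP[x0 x1] := interior_subset intx.
  have notin01 (z : R) : ~ (0 <= z <= 1) -> ~ cells P z by move=> h /cells_sub01.
  split.
    apply/andP; split; rewrite lt_neqAle ?x0 ?x1 andbT; apply/eqP => ex.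
      apply: (@not_interior_itv R _ (-1) 0 x _ _ _ intx); rewrite -?ex; try lra.
      by move=> z zI; apply: notin01; lra.
    apply: (@not_interior_itv R _ 1 2 x _ _ _ intx); rewrite ?ex; try lra.
    by move=> z zI; apply: notin01; lra.
  move=> s /andP[s1 sm] /[dup] xs /cellE xs'; apply: contrapT => /negP nPs.
  apply: (@not_interior_itv R _ ((s.-1)%:R / m%:R) (s%:R / m%:R) x _ xs _ intx).
    by rewrite ltr_pM2r ?invr_gt0 // ltr_nat; lia.
  move=> z /andP[lo hi]; apply: (@open_cell_notin_cells P s z s1 nPs).
  by move: lo hi; rewrite ltr_pdivrMr ?ltr_pdivlMr // => -> ->.
pose V := `]0, 1[ `\` cells (predC P).
have oV : open V.
  apply: openI; first exact: itv_open.
  apply: closed_openC; apply: closed_bigcup => [|s _]; last exact: itv_closed.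
  apply: (@sub_finite_set _ _ `I_m.+1); last exact: finite_II.
  by move=> s [/andP[_ sm] _] /=; lia.
have VP : V `<=` cells P.
  move=> z [/= zI ncz]; have [s sm zs] : exists2 s, (1 <= s <= m)%N & cell s z.
    by apply: cells_cover; move: zI; rewrite /= in_itv /= => /andP[? ?]; rewrite !ltW.
  by exists s => //; split=> //; apply: contrapT => /negP nPs; apply: ncz; exists s.
rewrite open_subsetE // in VP; apply: VP; split; first by rewrite /= in_itv /= x0 x1.
by move=> [s [sm nPs] xs]; move: nPs; rewrite /= Pcov.
Qed.

Lemma compl01_interior_cells P : compl01 (cells P)° = [set 0; 1] `|` cells (predC P).
Proof.
apply/seteqP; split=> [x [/= x01 nintx]|x].
  have [->|x0] := eqVneq x 0; first by left; left.
  have [->|x1] := eqVneq x 1; first by left; right.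
  right; apply: contrapT => ncx; apply: nintx; apply/interior_cellsP.
  split; first by move: x01 => /andP[? ?]; rewrite !lt_neqAle eq_sym x0 x1 /=; apply/andP.
  by move=> s sm xs; apply: contrapT => /negP nPs; apply: ncx; exists s.
move=> /[dup] x01 [[] ->|[s [sm nPs] xs]]; split=> /=; rewrite ?lexx ?ler01 //.
- by move=> /interior_cellsP[]; rewrite ltxx.
- by move=> /interior_cellsP[]; rewrite ltxx andbF.
- by apply: cell_sub01 xs; case/andP: sm.
- by move=> /interior_cellsP[_ /(_ s sm xs)]; apply/negP.
Qed.
End Cells.

Section Refinement.
Variables (R : realType) (m : nat).
Hypothesis m_gt0 : (0 < m)%N.
Let mR_gt0 : 0 < m%:R :> R. Proof. by rewrite ltr0n. Qed.
Let mR1 : m.+1%:R = m%:R + 1 :> R. Proof. by rewrite -natr1. Qed.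

Lemma cell_succ_near s (x : R) : (s <= m)%N -> cell m s x ->
  exists2 y : R, cell m.+1 s y & `|x - y| <= 1 / m.+1%:R.
Proof.
move=> sm xs; have /andP[x0 x1] := cell_sub01 m_gt0 sm xs.
move/(cellE m_gt0): xs => /andP[lo hi].
have [xs|xs] := lerP (x * m.+1%:R) s%:R.
  exists x; last by rewrite subrr normr0.
  by apply/cellE => //; rewrite mR1 in xs *; apply/andP; split; nra.
exists (s%:R / m.+1%:R); first by apply/cellE => //; rewrite divfK ?pnatr_eq0 // lexx andbT ler_nat leq_pred.
apply: (@dist_le_inv R) => //; rewrite divfK ?pnatr_eq0 // ger0_norm ?subr_ge0 ?(ltW xs) //.
by move: xs; rewrite mR1; nra.
Qed.

Lemma cell_near_succ s (y : R) : (1 <= s <= m)%N -> cell m.+1 s y ->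
  exists2 x : R, cell m s x & `|y - x| <= 1 / m.+1%:R.
Proof.
move=> /andP[s1 sm] ys; have /andP[y0 y1] := cell_sub01 (ltn0Sn m) (leqW sm) ys.
move/(cellE (ltn0Sn _)): ys => /andP[lo hi].
have [ys|ys] := lerP (s.-1)%:R (y * m%:R).
  exists y; last by rewrite subrr normr0.
  by apply/(cellE m_gt0); rewrite ys /=; move: hi; rewrite mR1; nra.
set x : R := (s.-1)%:R / m%:R.
have xm : x * m%:R = (s.-1)%:R by rewrite divfK ?gt_eqF.
have xs : cell m s x by apply/(cellE m_gt0); rewrite xm lexx ler_nat leq_pred.
exists x => //; have /andP[_ x1] := cell_sub01 m_gt0 sm xs.
have yx : y < x by rewrite -(ltr_pM2r mR_gt0) xm.
apply: (@dist_le_inv R) => //; rewrite distrC ger0_norm; last first.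
  by rewrite subr_ge0 ler_pM2r ?ltr0n // ltW.
by move: lo; rewrite mR1; nra.
Qed.

Lemma last_cell_near1 (y : R) : cell m.+1 m.+1 y -> `|y - 1| <= 1 / m.+1%:R.
Proof.
move=> ys; have /andP[_ y1] := cell_sub01 (ltn0Sn m) (leqnn _) ys.
move/(cellE (ltn0Sn _)): ys => /andP[lo _].
apply: (@dist_le_inv R) => //; rewrite mul1r distrC ger0_norm;
  move: lo; rewrite /= mR1 mulrDr mulr1 => lo; last have := mR_gt0; nra.
Qed.

Lemma hausdorff_interior_cells_succ (P Q : pred nat) :
  (forall s, (1 <= s <= m)%N -> P s = Q s) ->
  hausdorff (compl01 (cells m P : set R)°) (compl01 (cells m.+1 Q)°) <= 1 / m.+1%:R.
Proof.
move=> PQ; rewrite !compl01_interior_cells //.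
have near_self (z : R) : `|z - z| <= 1 / m.+1%:R by rewrite subrr normr0 divr_ge0.
apply: hausdorff_le => [|x|y]; first by rewrite divr_ge0.
  case=> [x01|[s [/andP[s1 sm] nPs] xs]]; first by exists x => //; left.
  have [y ys xy] := cell_succ_near sm xs.
  by exists y => //; right; exists s => //; split; [lia | rewrite /= -PQ ?s1].
case=> [y01|[s [/andP[s1 sm] nQs] ys]]; first by exists y => //; left.
have [sm'|sm'] := leqP s m.
  have [x xs yx] := cell_near_succ (introT andP (conj s1 sm')) ys.
  by exists x => //; right; exists s => //; split; [lia | rewrite /= PQ ?s1].
have es : s = m.+1 by lia.
rewrite {}es in ys; exists 1; last exact: last_cell_near1.
by left; rewrite /setU /=; right.
Qed.

End Refinement.

Lemma sumn_gt0 (s : seq nat) : all (fun x => 0 < x)%N s -> (0 < size s)%N -> (0 < sumn s)%N.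
Proof. by case: s => //= x s /andP[x0 _] _; rewrite ltn_addr. Qed.

Lemma mem_descents (lam : seq nat) d : all (fun x => 0 < x)%N lam ->
  d \in descents lam -> (0 < d < sumn lam)%N.
Proof.
move=> lam_pos /mapP[k]; rewrite mem_iota => /andP[k1 ks] ->.
move: lam_pos; rewrite -[in sumn lam](cat_take_drop k lam) sumn_cat.
rewrite -{1}(cat_take_drop k lam) all_cat => /andP[take_pos drop_pos].
have := sumn_gt0 take_pos; rewrite size_take; have := sumn_gt0 drop_pos; rewrite size_drop.
case: ifP; lia.
Qed.

Lemma nth_mem_or_default (T : eqType) (x0 : T) s i : (nth x0 s i \in s) || (nth x0 s i == x0).
Proof. by have [/(mem_nth x0) ->|/(nth_default x0) ->] := ltnP i (size s); rewrite ?eqxx ?orbT. Qed.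

Section NextInSorted.
Variables (s : seq nat) (d a : nat).
Hypotheses (s_sorted : sorted ltn s) (s_lt_d : all (fun x => x < d)%N s) (a_in : a \in s).

Let i := index a s.
Let b := nth d s i.+1.

Let nth_ltn j k : (j < k < size s)%N -> (nth d s j < nth d s k)%N.
Proof. by move=> /andP[jk ks]; apply: (sorted_ltn_nth ltn_trans) => //; rewrite inE; lia. Qed.

Let nth_i : nth d s i = a. Proof. exact: nth_index. Qed.
Let i_lt : (i < size s)%N. Proof. by rewrite index_mem. Qed.

Lemma sorted_next_gt : (a < b)%N.
Proof.
have [isz|isz] := ltnP i.+1 (size s); first by rewrite -[X in (X < _)%N]nth_i nth_ltn ?ltnSn.
by rewrite /b nth_default //; exact: (allP s_lt_d).
Qed.

Lemma sorted_next_gap j : (a < j < b)%N -> j \notin s.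
Proof.
move=> /andP[aj jb]; apply/negP => js; have jk := nth_index d js.
have ks : (index j s < size s)%N by rewrite index_mem.
have [ki|ik|ik] := ltngtP (index j s) i.+1.
- have [ki'|ik'|ei] := ltngtP (index j s) i; last by move: aj; rewrite -jk ei nth_i ltnn.
  + by have := @nth_ltn (index j s) i; rewrite jk nth_i; lia.
  + lia.
- by have := @nth_ltn i.+1 (index j s); rewrite jk -/b; lia.
- by move: jb; rewrite -jk ik ltnn.
Qed.

End NextInSorted.

Section Runs.
Variables (R : realType) (n : nat) (lam : seq nat).
Hypotheses (n_gt1 : (1 < n)%N) (lam_comp : is_composition n lam).

Local Notation D := (descents lam).
Local Notation pv := (peaks_valleys n lam).
Local Notation next := (next_pv n lam).

(* The colour of the j-th cell of the run paintbox: peaks start runs of colour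
   [true], valleys runs of colour [false]. The last cell always has the colour
   opposite to cell n-1, as n is a peak or a valley. *)
Definition colour (j : nat) : bool := if (j < n)%N then j \in D else n.-1 \notin D.

Let mem_D j : j \in D -> (0 < j < n)%N.
Proof. by case: lam_comp => lam_pos <-; exact: mem_descents. Qed.

Lemma mem_pv a : (a \in pv) = (1 <= a <= n)%N && (is_peak n lam a || is_valley n lam a).
Proof. by rewrite mem_filter mem_iota andbC; congr (_ && _); lia. Qed.

Lemma pv_colour a : a \in pv -> is_peak n lam a = colour a /\ is_valley n lam a = ~~ colour a.
Proof.
rewrite mem_pv /is_peak /is_valley /colour => /andP[an].
have nD : n \notin D by apply/negP => /mem_D; lia.
have [a_lt|a_ge] := ltnP a n.
  have -> : (a == n) = false by apply/eqP; lia.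
  by case: (a \in D); case: (a.-1 \in D); rewrite ?orbF ?orbT //=; case: (a.-1 == 0%N).
have -> : a = n by lia.
rewrite eqxx (negbTE nD) /=.
have -> : (n.-1 == 0%N) = false by apply/eqP; lia.
by move=> _; case: (n.-1 \in D).
Qed.

Lemma mem_pv_colour_change j : (2 <= j <= n)%N -> (j \in pv) = (colour j != colour j.-1).
Proof.
move=> j2n; have nD : n \notin D by apply/negP => /mem_D; lia.
rewrite mem_pv /is_peak /is_valley /colour.
have -> : (1 <= j <= n)%N by lia.
have -> : (j.-1 < n)%N by lia.
have -> : (j.-1 == 0%N) = false by apply/eqP; lia.
have [j_lt|j_ge] := ltnP j n.
  have -> : (j == n) = false by apply/eqP; lia.
  by case: (j \in D); case: (j.-1 \in D).
have -> : j = n by lia.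
by rewrite eqxx (negbTE nD); case: (n.-1 \in D).
Qed.

Lemma mem_pv1 : 1%N \in pv.
Proof.
have D0 : 0%N \notin D by apply/negP => /mem_D.
rewrite mem_pv /is_peak /is_valley (negbTE D0) eqxx orbT /= andbT.
by case: (1%N \in D); rewrite (ltnW n_gt1) ?orbT.
Qed.

Lemma pv_bounds a : a \in pv -> (1 <= a <= n)%N.
Proof. by rewrite mem_pv => /andP[]. Qed.

Let pv_sorted : sorted ltn pv.
Proof. exact/sorted_filter/iota_ltn_sorted/ltn_trans. Qed.

Let pv_lt : all (fun x => x < n.+1)%N pv.
Proof. by apply/allP => a /pv_bounds; lia. Qed.

Lemma next_pv_le a : a \in pv -> (next a <= n.+1)%N.
Proof.
move=> apv; rewrite /next_pv; have /orP[bpv|/eqP ->//] := nth_mem_or_default n.+1 pv (index a pv).+1.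
by case/pv_bounds/andP: bpv => _ /leqW.
Qed.

Lemma colour_run a j : a \in pv -> (a <= j < next a)%N -> colour j = colour a.
Proof.
move=> apv; have a1n := pv_bounds apv; have bn := next_pv_le apv.
elim: j => [|j IH] /andP[aj jb]; first by lia.
have [ltaj|] := ltnP a j.+1; last by move=> ja; have -> : j.+1 = a by lia.
have jpv : j.+1 \notin pv.
  by apply: (sorted_next_gap pv_sorted pv_lt apv); rewrite ltaj; exact: jb.
rewrite -IH; last by lia.
by apply/eqP; apply: contraNT jpv; rewrite mem_pv_colour_change //; lia.
Qed.

Lemma run_cover j : (1 <= j <= n)%N -> exists2 a, a \in pv & (a <= j < next a)%N.
Proof.
elim: j => [|j IH] // j1n.
have [jpv|jpv] := boolP (j.+1 \in pv).
  by exists j.+1 => //; rewrite leqnn /= (sorted_next_gt pv_sorted pv_lt jpv).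
have [j0|j_gt0] := posnP j; first by move: jpv; rewrite j0 mem_pv1.
have [a apv /andP[aj jb]] := IH (ltac:(lia)).
exists a => //; rewrite (leqW aj) /= ltn_neqAle jb andbT; apply/eqP => e.
have := nth_mem_or_default n.+1 pv (index a pv).+1.
by rewrite -/(next a) -e (negbTE jpv) /=; lia.
Qed.

Let n_gt0 : (0 < n)%N. Proof. exact: ltnW. Qed.
Let nR_gt0 : 0 < n%:R :> R. Proof. by rewrite ltr0n. Qed.

Lemma run_intervalE a (x : R) :
  run_interval n lam a x <-> (a.-1)%:R < x * n%:R < (next a).-1%:R.
Proof. by rewrite /run_interval /= ltr_pdivrMr ?ltr_pdivlMr. Qed.

Lemma interior_run_interval a (x : R) : a \in pv -> run_interval n lam a x ->
  (cells n (fun j => colour j == colour a))° x.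
Proof.
move=> apv /run_intervalE /andP[lo hi]; apply/(interior_cellsP n_gt0); split.
  have bn := next_pv_le apv.
  have : (next a).-1%:R <= n%:R :> R by rewrite ler_nat; clear -bn; lia.
  have : 0 <= (a.-1)%:R :> R by [].
  by move=> ? ?; apply/andP; split; nra.
move=> s /andP[s1 _] /(cellE n_gt0) /andP[slo shi].
have /andP[a1 _] := pv_bounds apv.
have lt_a_s : (a.-1 < s)%N by rewrite -(ltr_nat R); apply: lt_le_trans shi.
have lt_s_b : (s.-1 < (next a).-1)%N by rewrite -(ltr_nat R); apply: le_lt_trans hi.
by rewrite (colour_run apv) //; clear -a1 s1 lt_a_s lt_s_b; lia.
Qed.

Lemma run_interval_of_interior c (x : R) : (cells n (fun j => colour j == c))° x ->
  exists2 a, a \in pv /\ colour a == c & run_interval n lam a x.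
Proof.
move=> /(interior_cellsP n_gt0) [/andP[x0 x1] cov].
have xn_ge0 : 0 <= x * n%:R by rewrite mulr_ge0 // ltW.
have kn : (Num.truncn (x * n%:R) < n)%N by rewrite truncn_lt_nat //= -[ltRHS]mul1r ltr_pM2r.
have /andP[] := truncn_itv xn_ge0; move: (Num.truncn _) kn => k kn klo khi.
have k1n : (1 <= k.+1 <= n)%N by [].
have col_k1 : colour k.+1 == c by apply: cov => //; apply/(cellE n_gt0); rewrite klo ltW.
have [a apv /andP[ak kb]] := run_cover k1n.
exists a; first by rewrite -(colour_run (j := k.+1) apv) ?ak.
apply/run_intervalE; apply/andP; split; last first.
  by apply: lt_le_trans khi _; rewrite ler_nat -ltnS (ltn_predK kb).
have [ak'|ka] := ltnP a k.+1.
  have /andP[a1 _] := pv_bounds apv.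
  by apply: lt_le_trans klo; rewrite ltr_nat prednK.
have ea : a = k.+1 by apply/eqP; rewrite eqn_leq ak ka.
subst a; rewrite /= lt_neqAle klo andbT; apply/eqP => xk.
have k1 : (0 < k)%N.
  by rewrite lt0n; apply/eqP => k0; move: x0; rewrite -(ltr_pM2r nR_gt0) mul0r -xk k0 ltxx.
have col_k : colour k == c.
  by apply: cov; [rewrite k1 ltnW | apply/(cellE n_gt0); rewrite -xk lexx ler_nat leq_pred].
move: apv; rewrite mem_pv_colour_change //= ?ltnS ?k1 //.
by rewrite (eqP col_k1) (eqP col_k) eqxx.
Qed.

Lemma run_paintbox_interior c (Q : pred nat) :
  (forall a, a \in pv -> Q a = (colour a == c)) ->
  \bigcup_(a in [set a | a \in pv /\ Q a]) @run_interval R n lam a =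
  (cells n (fun j => colour j == c))°.
Proof.
move=> Qc; apply/seteqP; split=> x.
  by move=> [a [apv]]; rewrite Qc // => /eqP <-; exact: interior_run_interval.
by move=> /run_interval_of_interior[a [apv ca] ax]; exists a => //; split; rewrite // Qc.
Qed.

End Runs.

Theorem lemma11 (R : realType) (n : nat) (lam : seq nat) :
  (2 <= n)%N -> is_composition n lam ->
  dU2 (U_lam R n lam) (run_paintbox R n lam) <= 1 / n%:R.
Proof.
case: n => [|m] // n_gt1 lam_comp.
have runsE := @run_paintbox_interior R m.+1 lam n_gt1 lam_comp.
have colourE s : (s <= m)%N -> colour m.+1 lam s = (s \in descents lam).
  by move=> sm; rewrite /colour ltnS sm.
rewrite /dU2 /run_paintbox /= ge_max; apply/andP; split.
  rewrite (runsE false (is_valley m.+1 lam)) => [|a apv]; last first.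
    by have [_ ->] := pv_colour n_gt1 lam_comp apv; case: colour.
  apply: hausdorff_interior_cells_succ => [|s /andP[_ sm]]; first lia.
  by rewrite colourE //; case: (s \in _).
rewrite (runsE true (is_peak m.+1 lam)) => [|a apv]; last first.
  by have [-> _] := pv_colour n_gt1 lam_comp apv; case: colour.
apply: hausdorff_interior_cells_succ => [|s /andP[_ sm]]; first lia.
by rewrite colourE //; case: (s \in _).
Qed.
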